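(* Let $p\ge5$ be prime and let $H\le{\rm AGL}(1,p)$ consist of all maps $x\mapsto ax+b$ with $a$ a nonzero quadratic residue modulo $p$ and $b\in\mathbb F_p$. Then $H\wr S_2$, in the product action on $\mathbb F_p^2$, is a primitive group of degree $p^2$ all of whose elements are imprimitive permutations, and it contains the normal subgroup $H\times H$ of index $2$, which is imprimitive.
   Context: For $H\le{\rm Sym}(\Delta)$, $H\wr S_2$ in product action acts on $\Delta^2$ by applying elements of $H$ coordinatewise and possibly swapping the two coordinates. A permutation of a set $\Omega$ of size $n$ is imprimitive if it preserves a partition of $\Omega$ into blocks of equal size $m$ with $1<m<n$; a transitive group is imprimitive if it preserves such a partition. *)

From HB Require Import structures.
From mathcomp Require Import all_boot all_order all_algebra all_fingroup all_solvable.
Set Implicit Arguments. Unset Strict Implicit. Unset Printing Implicit Defensive.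
Import GRing.Theory.

Definition nz_qr (p : nat) (a : 'F_p) : bool :=
  (a != 0%R) && [exists c : 'F_p, (c ^+ 2)%R == a].

Definition Hqr (p : nat) : {set {perm 'F_p}} :=
  [set s : {perm 'F_p} | [exists a : 'F_p, exists b : 'F_p,
     nz_qr a && [forall x : 'F_p, s x == (a * x + b)%R]]].

Definition wrS2 (p : nat) : {set {perm ('F_p * 'F_p)}} :=
  [set g : {perm ('F_p * 'F_p)} | [exists h1 in Hqr p, exists h2 in Hqr p,
     [forall x, g x == (h1 x.1, h2 x.2)] || [forall x, g x == (h1 x.2, h2 x.1)]]].

Definition baseHH (p : nat) : {set {perm ('F_p * 'F_p)}} :=
  [set g : {perm ('F_p * 'F_p)} | [exists h1 in Hqr p, exists h2 in Hqr p,
     [forall x, g x == (h1 x.1, h2 x.2)]]].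

Definition uniform_block_system (T : finType) (P : {set {set T}}) : Prop :=
  partition P [set: T] /\
  exists m : nat, 1 < m < #|T| /\ forall B, B \in P -> #|B| = m.

Definition perm_imprimitive (T : finType) (g : {perm T}) : Prop :=
  exists P : {set {set T}}, uniform_block_system P /\
    forall B, B \in P -> [set g x | x in B] \in P.

Definition group_imprimitive (T : finType) (K : {set {perm T}}) : Prop :=
  [transitive K, on [set: T] | 'P] /\
  exists P : {set {set T}}, uniform_block_system P /\
    forall g, g \in K -> forall B, B \in P -> [set g x | x in B] \in P.

From mathcomp Require Import all_boot all_order all_algebra all_fingroup all_solvable.
From mathcomp Require Import ring zify.
Set Implicit Arguments. Unset Strict Implicit. Unset Printing Implicit Defensive.
Import GRing.Theory.
Local Open Scope ring_scope.

(* The base group H x H contains all translations of F_p^2, so a block of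
   H wr S_2 through 0 is an additive subgroup of F_p^2; it is moreover stable
   under the swap of coordinates and under (x, y) |-> (4x, y).  For p >= 5 the
   only such subgroups are 0 and F_p^2, whence primitivity.  On the other hand
   each element preserves a parallel class of lines x + b y = const: take b = 0
   for elements of H x H, and b = c1/c2 for (x, y) |-> (c1^2 y + b1, c2^2 x + b2),
   which is possible because the multipliers of H are squares. *)

Lemma swap_inj (T : Type) : injective (fun z : T * T => (z.2, z.1)).
Proof. by move=> [x1 y1] [x2 y2] [-> ->]. Qed.

Definition swap_perm (T : finType) : {perm T * T} := perm (@swap_inj T).

Lemma swap_permE (T : finType) (z : T * T) : swap_perm T z = (z.2, z.1).
Proof. by rewrite permE. Qed.

Lemma swap_permV (T : finType) : (swap_perm T)^-1%g = swap_perm T.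
Proof. by apply/permP => z; apply: (canLR (permK _)); rewrite !swap_permE; case: z. Qed.

Section UniformFibres.

Variables (T U : finType) (f : T -> U) (m : nat).
Hypothesis card_fibre : forall c, #|[set x | f x == c]| = m.

Let P := preim_partition f [set: T].

Lemma mem_preim_partitionP B :
  reflect (exists x, B = [set y | f y == f x]) (B \in P).
Proof.
apply: (iffP imsetP) => [[x _ ->] | [x ->]]; exists x => //; apply/setP => y;
  by rewrite !inE eq_sym.
Qed.

Lemma uniform_block_system_preim : (1 < m < #|T|)%N -> uniform_block_system P.
Proof.
move=> m_bounds; split; first exact: preim_partitionP.
by exists m; split=> // B /mem_preim_partitionP[x ->].
Qed.

Lemma preim_partition_perm (g : {perm T}) (psi : U -> U) :
  (forall x, f (g x) = psi (f x)) ->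
  forall B, B \in P -> [set g x | x in B] \in P.
Proof.
move=> fg B /mem_preim_partitionP[x ->]; apply/mem_preim_partitionP; exists (g x).
apply/eqP; rewrite eqEcard (card_imset _ (@perm_inj _ g)) !card_fibre leqnn andbT.
by apply/subsetP => _ /imsetP[y + ->]; rewrite !inE !fg => /eqP->.
Qed.

Lemma perm_imprimitive_preim (g : {perm T}) (psi : U -> U) :
  (1 < m < #|T|)%N -> (forall x, f (g x) = psi (f x)) -> perm_imprimitive g.
Proof.
move=> m_bounds fg; exists P; split; first exact: uniform_block_system_preim.
exact: preim_partition_perm fg.
Qed.

End UniformFibres.

Definition lin_form (R : nzRingType) (b : R) (z : R * R) : R := z.1 + b * z.2.

Lemma card_lin_form_fibre (R : finNzRingType) (b c : R) :
  #|[set z | lin_form b z == c]| = #|R|.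
Proof.
have line_inj : injective (fun t : R => (c - b * t, t)) by move=> s t [].
rewrite -cardsT -(card_imset _ line_inj); apply: eq_card => z.
rewrite !inE /lin_form; apply/eqP/imsetP => [<- | [t _ ->]].
  by exists z.2; rewrite ?inE // addrK; case: z.
by rewrite /= subrK.
Qed.

Lemma primitive_of_blocks (T : finType) (G : {group {perm T}}) (x0 : T) :
  [transitive G, on [set: T] | 'P] ->
  (forall B : {set T}, x0 \in B ->
     (forall g y, g \in G -> g x0 \in B -> y \in B -> g y \in B) ->
     (exists2 y, y \in B & y != x0) -> B = [set: T]) ->
  [primitive G, on [set: T] | 'P].
Proof.
move=> trG blocks_full; apply/andP; split=> //.
apply/existsP => -[Q /and3P[partQ actQ /andP[Q_gt1 Q_lt]]].
have [/eqP covQ tiQ n0Q] := and3P partQ.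
have pblockQ y : pblock Q y \in Q by rewrite pblock_mem // covQ inE.
have mem_pblockQ y : y \in pblock Q y by rewrite mem_pblock covQ inE.
have pblock_image g y : g \in G -> [set g z | z in pblock Q y] = pblock Q (g y).
  move=> Gg; apply/esym/def_pblock; rewrite ?imset_f //.
  by have := (actsP actQ) g Gg (pblock Q y); rewrite pblockQ.
have closedB g y : g \in G -> g x0 \in pblock Q x0 -> y \in pblock Q x0 ->
    g y \in pblock Q x0.
  by move=> Gg gB yB; rewrite -(def_pblock tiQ (pblockQ x0) gB) -pblock_image ?imset_f.
set B := pblock Q x0.
case: (pickP [pred y | (y \in B) && (y != x0)]) => [y /andP[By yx0] | B_x0].
  have B_full := blocks_full B (mem_pblockQ x0) closedB (ex_intro2 _ _ y By yx0).
  have : Q \subset [set B].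
    apply/subsetP => Y QY.
    have /set0Pn[y' Yy'] : Y != set0 by apply: contraNneq n0Q => <-.
    have By' : y' \in B by rewrite B_full inE.
    by rewrite inE -(def_pblock tiQ QY Yy') (def_pblock tiQ (pblockQ x0) By').
  by move/subset_leq_card; rewrite cards1 leqNgt Q_gt1.
have B1 : B = [set x0].
  apply/setP => y; rewrite inE; apply/idP/eqP => [By | ->]; last exact: mem_pblockQ.
  by move: (B_x0 y); rewrite /= By => /negbFE/eqP.
have card_block Y : Y \in Q -> #|Y| = 1%N.
  move=> QY; have /set0Pn[y Yy] : Y != set0 by apply: contraNneq n0Q => <-.
  have [g Gg yE] := atransP2 trG (in_setT x0) (in_setT y).
  by rewrite -(def_pblock tiQ QY Yy) yE -pblock_image // -/B B1 imset_set1 cards1.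
move: Q_lt; rewrite (card_partition partQ) (eq_bigr _ card_block) sum1_card.
by rewrite ltnn.
Qed.

Lemma Fp_natr_neq0 p n : prime p -> (0 < n < p)%N -> n%:R != 0 :> 'F_p.
Proof.
move=> hp /andP[n_gt0 n_lt_p]; rewrite -(dvdn_pcharf (pchar_Fp hp)).
by apply/negP => /(dvdn_leq n_gt0); rewrite leqNgt n_lt_p.
Qed.

Lemma HqrP p (s : {perm 'F_p}) :
  reflect (exists c b : 'F_p, c != 0 /\ forall x, s x = c ^+ 2 * x + b)
          (s \in Hqr p).
Proof.
rewrite inE; apply: (iffP existsP) => [[a /existsP[b]] | [c [b [c0 sE]]]].
  case/andP=> /andP[a0 /existsP[c /eqP ca]] /forallP sE.
  by exists c, b; split=> [|x]; [rewrite -sqrf_eq0 ca | rewrite ca; apply/eqP].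
exists (c ^+ 2); apply/existsP; exists b.
rewrite /nz_qr sqrf_eq0 c0 /=; apply/andP; split.
  by apply/existsP; exists c.
by apply/forallP => x; rewrite sE.
Qed.

Lemma Hqr_group_set p : group_set (Hqr p).
Proof.
apply/group_setP; split.
  by apply/HqrP; exists 1, 0; split=> [|x]; rewrite ?oner_neq0 // perm1 expr1n mul1r addr0.
move=> s t /HqrP[c1 [b1 [c10 sE]]] /HqrP[c2 [b2 [c20 tE]]].
apply/HqrP; exists (c2 * c1), (c2 ^+ 2 * b1 + b2); split; first by rewrite mulf_neq0.
by move=> x; rewrite permM sE tE; ring.
Qed.

Canonical Hqr_group p := Group (Hqr_group_set p).

Lemma wrS2P p (g : {perm 'F_p * 'F_p}) :
  reflect (exists h1 h2, [/\ h1 \in Hqr p, h2 \in Hqr p &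
             (forall z, g z = (h1 z.1, h2 z.2)) \/ (forall z, g z = (h1 z.2, h2 z.1))])
          (g \in wrS2 p).
Proof.
rewrite inE; apply: (iffP exists_inP) => [[h1 H1 /exists_inP[h2 H2]] | [h1 [h2 [H1 H2 gE]]]].
  by case/orP=> /forallP gE; exists h1, h2; split=> //; [left | right] => z; apply/eqP.
exists h1 => //; apply/exists_inP; exists h2 => //.
by case: gE => gE; apply/orP; [left | right]; apply/forallP => z; rewrite gE.
Qed.

Lemma baseHHP p (g : {perm 'F_p * 'F_p}) :
  reflect (exists h1 h2, [/\ h1 \in Hqr p, h2 \in Hqr p & forall z, g z = (h1 z.1, h2 z.2)])
          (g \in baseHH p).
Proof.
rewrite inE; apply: (iffP exists_inP) =>
  [[h1 H1 /exists_inP[h2 H2 /forallP gE]] | [h1 [h2 [H1 H2 gE]]]].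
  by exists h1, h2; split=> // z; apply/eqP.
by exists h1 => //; apply/exists_inP; exists h2 => //; apply/forallP => z; rewrite gE.
Qed.

Lemma baseHH_sub_wrS2 p : baseHH p \subset wrS2 p.
Proof.
apply/subsetP => g /baseHHP[h1 [h2 [H1 H2 gE]]].
by apply/wrS2P; exists h1, h2; split=> //; left.
Qed.

Lemma wrS2_group_set p : group_set (wrS2 p).
Proof.
apply/group_setP; split.
  by apply/wrS2P; exists 1%g, 1%g; split=> //; left=> -[x y]; rewrite !perm1.
move=> g k /wrS2P[h1 [h2 [H1 H2 gE]]] /wrS2P[k1 [k2 [K1 K2 kE]]]; apply/wrS2P.
case: gE => gE; case: kE => kE.
- exists (h1 * k1)%g, (h2 * k2)%g; split; rewrite ?groupM //.
  by left=> z; rewrite permM gE kE !permM.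
- exists (h2 * k1)%g, (h1 * k2)%g; split; rewrite ?groupM //.
  by right=> z; rewrite permM gE kE !permM.
- exists (h1 * k1)%g, (h2 * k2)%g; split; rewrite ?groupM //.
  by right=> z; rewrite permM gE kE !permM.
- exists (h2 * k1)%g, (h1 * k2)%g; split; rewrite ?groupM //.
  by left=> z; rewrite permM gE kE !permM.
Qed.

Lemma baseHH_group_set p : group_set (baseHH p).
Proof.
apply/group_setP; split.
  by apply/baseHHP; exists 1%g, 1%g; split=> // -[x y]; rewrite !perm1.
move=> g k /baseHHP[h1 [h2 [H1 H2 gE]]] /baseHHP[k1 [k2 [K1 K2 kE]]].
apply/baseHHP; exists (h1 * k1)%g, (h2 * k2)%g; split; rewrite ?groupM // => z.
by rewrite permM gE kE !permM.
Qed.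

Canonical wrS2_group p := Group (wrS2_group_set p).
Canonical baseHH_group p := Group (baseHH_group_set p).

Lemma wrS2_diff_baseHH p : wrS2 p :\: baseHH p = (baseHH p :* swap_perm _)%g.
Proof.
apply/setP => g; rewrite inE mem_rcoset swap_permV.
have gsE z : (g * swap_perm _)%g z = ((g z).2, (g z).1) by rewrite permM swap_permE.
apply/andP/baseHHP => [[gK /wrS2P[h1 [h2 [H1 H2 [gE | gE]]]]] | [h1 [h2 [H1 H2 gsE']]]].
- by case/negP: gK; apply/baseHHP; exists h1, h2.
- by exists h2, h1; split=> // z; rewrite gsE gE.
have gE z : g z = (h2 z.2, h1 z.1) by move: (gsE z); rewrite gsE'; case: (g z) => ? ? [-> ->].
split; last by apply/wrS2P; exists h2, h1; split=> //; right.
apply/baseHHP => -[k1 [k2 [_ _ kE]]].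
have k1E x : k1 x = h2 0 by move: (kE (x, 0)); rewrite gE => -[<-].
by move/perm_inj/eqP: (etrans (k1E 1) (esym (k1E 0))); rewrite oner_eq0.
Qed.

Lemma index_baseHH p : #|wrS2 p : baseHH p|%g = 2%N.
Proof.
have := Lagrange (baseHH_sub_wrS2 p : baseHH_group p \subset wrS2_group p).
rewrite -(cardsID (baseHH p) (wrS2 p)) wrS2_diff_baseHH card_rcoset.
rewrite (setIidPr (baseHH_sub_wrS2 p)) addnn -muln2 => /eqP.
by rewrite eqn_pmul2l ?cardG_gt0 // => /eqP.
Qed.

Lemma baseHH_normal p : (baseHH p <| wrS2 p)%g.
Proof. exact: (index2_normal (G := wrS2_group p)) (baseHH_sub_wrS2 p) (index_baseHH p). Qed.

Lemma baseHH_affine p (c1 b1 c2 b2 : 'F_p) : c1 != 0 -> c2 != 0 ->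
  exists2 g, g \in baseHH p & forall z, g z = (c1 ^+ 2 * z.1 + b1, c2 ^+ 2 * z.2 + b2).
Proof.
move=> c10 c20.
have affine_inj (c b : 'F_p) : c != 0 -> injective (fun x => c ^+ 2 * x + b).
  by move=> c0 x y /addIr/mulfI; apply; rewrite sqrf_eq0.
have Hqr_affine (c b : 'F_p) (c0 : c != 0) : perm (affine_inj c b c0) \in Hqr p.
  by apply/HqrP; exists c, b; split=> // x; rewrite permE.
pose h1 := perm (affine_inj c1 b1 c10); pose h2 := perm (affine_inj c2 b2 c20).
have coord_inj : injective (fun z : 'F_p * 'F_p => (h1 z.1, h2 z.2)).
  by move=> [x1 y1] [x2 y2] [/perm_inj -> /perm_inj ->].
exists (perm coord_inj); last by move=> z; rewrite !permE.
by apply/baseHHP; exists h1, h2; split; rewrite ?Hqr_affine // => z; rewrite permE.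
Qed.

Lemma baseHH_translation p (w : 'F_p * 'F_p) :
  exists2 g, g \in baseHH p & forall z, g z = (z.1 + w.1, z.2 + w.2).
Proof.
have [g Kg gE] := baseHH_affine w.1 w.2 (oner_neq0 'F_p) (oner_neq0 'F_p).
by exists g => // z; rewrite gE !expr1n !mul1r.
Qed.

Lemma transitive_of_baseHH_sub p (A : {set {perm 'F_p * 'F_p}}) :
  baseHH p \subset A -> [transitive A, on [set: 'F_p * 'F_p] | 'P].
Proof.
move=> sKA; apply/imsetP; exists 0; rewrite ?inE //.
apply/setP => z; rewrite inE; apply/esym/orbitP.
have [g Kg gE] := baseHH_translation z.
by exists g; rewrite ?(subsetP sKA) //= apermE gE !add0r; case: z {gE}.
Qed.


Lemma card_Fp_bounds p : prime p -> (1 < #|'F_p| < #|{: 'F_p * 'F_p}|)%N.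
Proof.
move=> hp; rewrite card_prod card_Fp // prime_gt1 //=.
by rewrite ltn_Pmull ?prime_gt1 ?prime_gt0.
Qed.

Lemma wrS2_lin_form_equivariant p (g : {perm 'F_p * 'F_p}) : g \in wrS2 p ->
  exists b (psi : 'F_p -> 'F_p), forall z, lin_form b (g z) = psi (lin_form b z).
Proof.
case/wrS2P=> h1 [h2 [/HqrP[c1 [b1 [_ h1E]]] /HqrP[c2 [b2 [c20 h2E]]] [gE | gE]]].
  by exists 0, h1 => z; rewrite /lin_form gE !mul0r !addr0.
exists (c1 / c2), (fun t => c1 * c2 * t + (b1 + c1 / c2 * b2)) => z.
by rewrite /lin_form gE /= h1E h2E; field.
Qed.

Lemma wrS2_perm_imprimitive p (g : {perm 'F_p * 'F_p}) :
  prime p -> g \in wrS2 p -> perm_imprimitive g.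
Proof.
move=> hp /wrS2_lin_form_equivariant[b [psi gE]].
exact: (perm_imprimitive_preim (card_lin_form_fibre b) (card_Fp_bounds hp) gE).
Qed.

Lemma baseHH_imprimitive p : prime p -> group_imprimitive (baseHH p).
Proof.
move=> hp; split; first exact: transitive_of_baseHH_sub.
exists (preim_partition (lin_form (0 : 'F_p)) setT).
split; first exact: (uniform_block_system_preim (card_lin_form_fibre 0) (card_Fp_bounds hp)).
move=> g /baseHHP[h1 [h2 [_ _ gE]]].
have gE0 z : lin_form 0 (g z) = h1 (lin_form 0 z) by rewrite /lin_form gE !mul0r !addr0.
exact: (preim_partition_perm (card_lin_form_fibre 0) gE0).
Qed.


Lemma Fp2_invariant_set_full p (B : {set 'F_p * 'F_p}) : prime p -> (5 <= p)%N ->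
  0 \in B -> {in B &, forall z w, (z.1 + w.1, z.2 + w.2) \in B} ->
  {in B, forall z, (z.2, z.1) \in B} -> {in B, forall z, (2 ^+ 2 * z.1, z.2) \in B} ->
  (exists2 z, z \in B & z != 0) -> B = setT.
Proof.
move=> hp p_ge5 B0 addB swapB dilB [v Bv v_neq0].
have natmulB n z : z \in B -> (z.1 *+ n, z.2 *+ n) \in B.
  move=> Bz; elim: n => [|n IHn]; first by rewrite !mulr0n.
  by rewrite !mulrSr; apply: (addB _ _ IHn Bz).
have scaleB k z : z \in B -> (k * z.1, k * z.2) \in B.
  by rewrite -(natr_Zp k) !mulr_natl; apply: natmulB.
have [u u_neq0 Bu0] : exists2 u, u != 0 & (u, 0) \in B.
  have [v1_eq0 | v1_neq0] := eqVneq v.1 0.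
    exists v.2; last by rewrite -v1_eq0; apply: swapB.
    by apply: contraNneq v_neq0; case: v v1_eq0 {Bv} => /= ? ? -> ->.
  exists (3%:R * v.1); first by rewrite mulf_neq0 ?Fp_natr_neq0 //; lia.
  suff -> : (3%:R * v.1, 0) = (2 ^+ 2 * v.1 + -1 * v.1, v.2 + -1 * v.2).
    exact: addB (dilB _ Bv) (scaleB (-1) _ Bv).
  by congr (_, _); ring.
apply/setP => -[x y]; rewrite inE.
have axisB t : (t, 0) \in B by have := scaleB (t / u) _ Bu0; rewrite /= mulr0 divfK.
by have := addB _ _ (axisB x) (swapB _ (axisB y)); rewrite /= addr0 add0r.
Qed.

Lemma swap_perm_wrS2 p : swap_perm _ \in wrS2 p.
Proof. by apply/wrS2P; exists 1%g, 1%g; split=> //; right=> z; rewrite swap_permE !perm1. Qed.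

Lemma wrS2_primitive p : prime p -> (5 <= p)%N ->
  [primitive wrS2 p, on [set: 'F_p * 'F_p] | 'P].
Proof.
move=> hp p_ge5; have inW := subsetP (baseHH_sub_wrS2 p).
apply: (primitive_of_blocks (G := wrS2_group p) (x0 := 0)).
  exact: transitive_of_baseHH_sub (baseHH_sub_wrS2 p).
move=> B B0 closedB nzB; apply: Fp2_invariant_set_full nzB => //.
- move=> z w Bz Bw; have [g Kg gE] := baseHH_translation w.
  by rewrite -gE; apply: closedB; rewrite ?inW // gE !add0r; case: w Bw {gE}.
- by move=> z Bz; rewrite -swap_permE; apply: closedB; rewrite ?swap_perm_wrS2 ?swap_permE.
move=> z Bz; have two_neq0 : 2 != 0 :> 'F_p by apply: Fp_natr_neq0 => //; lia.
have [g Kg gE] := baseHH_affine 0 0 two_neq0 (oner_neq0 'F_p).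
have gz : g z = (2 ^+ 2 * z.1, z.2) by rewrite gE expr1n mul1r !addr0.
by rewrite -gz; apply: closedB; rewrite ?inW // gE !mulr0 !addr0.
Qed.

Local Close Scope ring_scope.

Theorem mainTheorem8 (p : nat) (hp : prime p) (hp5 : 5 <= p) :
  [/\ group_set (wrS2 p),
      #|[set: 'F_p * 'F_p]| = p ^ 2,
      [primitive wrS2 p, on [set: 'F_p * 'F_p] | 'P],
      (forall g, g \in wrS2 p -> perm_imprimitive g) &
      [/\ group_set (baseHH p), (baseHH p <| wrS2 p)%g,
          #|wrS2 p : baseHH p|%g = 2 & group_imprimitive (baseHH p)]].
Proof.
split.
- exact: wrS2_group_set.
- by rewrite cardsT card_prod card_Fp.
- exact: wrS2_primitive.
- by move=> g; apply: wrS2_perm_imprimitive.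
split.
- exact: baseHH_group_set.
- exact: baseHH_normal.
- exact: index_baseHH.
- exact: baseHH_imprimitive.
Qed.
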